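(* Let $n>k$ be positive integers and $\ell$ an integer with $0\le\ell\le k-1$. Then $n_{\ge 0}(G(n,k,\{\ell\}))\le n$.
   Context: For positive integers $n>k$ and $L\subseteq\{0,1,\dots,k-1\}$, the generalized Johnson graph $G(n,k,L)$ has vertex set $\binom{[n]}{k}$, with $A,B$ adjacent if and only if $|A\cap B|\notin L$. A weighted adjacency matrix of a graph $G=(V,E)$ is a Hermitian matrix indexed by $V$ with $A_{ij}\neq0$ only if $ij\in E$. For a Hermitian matrix $X$, $n_{\ge0}(X)$ is its number of nonnegative eigenvalues (with multiplicity), and $n_{\ge0}(G)$ is the minimum of $n_{\ge0}(A)$ over all weighted adjacency matrices $A$ of $G$. *)

From HB Require Import structures.
From mathcomp Require Import all_boot all_order all_algebra.
Set Implicit Arguments. Unset Strict Implicit. Unset Printing Implicit Defensive.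
Import Order.TTheory GRing.Theory Num.Theory.
Local Open Scope ring_scope.

Definition ksubset (n k : nat) := {A : {set 'I_n} | #|A| == k}.

Definition johnson_adj (n k : nat) (L : pred nat) (A B : ksubset n k) : bool :=
  (A != B) && ~~ L #|val A :&: val B|.

(* Matrices indexed by a finite vertex type V are 'M_#|V|, row/column i
   corresponding to vertex enum_val i. *)
Definition hermitian (C : numClosedFieldType) (m : nat) (X : 'M[C]_m) : Prop :=
  forall i j, X j i = (X i j)^*.

Definition weighted_adjacency (C : numClosedFieldType) (V : finType)
    (adj : rel V) (X : 'M[C]_#|V|) : Prop :=
  hermitian X /\ forall i j, X i j != 0 -> adj (enum_val i) (enum_val j).

Definition eigenvalues (C : numClosedFieldType) (m : nat) (X : 'M[C]_m) : seq C :=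
  sval (closed_field_poly_normal (char_poly X)).

Definition n_ge0 (C : numClosedFieldType) (m : nat) (X : 'M[C]_m) : nat :=
  count (fun z => 0 <= z) (eigenvalues X).

From Pilot Require Import Defs.
From HB Require Import structures.
From mathcomp Require Import all_boot all_order all_algebra.
From mathcomp Require Import sesquilinear spectral.
Set Implicit Arguments.
Unset Strict Implicit.
Unset Printing Implicit Defensive.
Import Order.TTheory GRing.Theory Num.Theory.
Local Open Scope ring_scope.
Local Open Scope sesquilinear_scope.

(* Let [S_1, ..., S_m] be the k-subsets of [n] and [M] their m x n incidence
   matrix.  The matrix [Y = M M^T - l J - (k - l) I] has entries
   [|S_i :&: S_j| - l] off the diagonal and [0] on it, so it is a weighted
   adjacency matrix of G(n,k,{l}).  On the left kernel of [M], a subspace of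
   codimension at most n, the form of [Y] is
   [x Y x^* = - l |x 1|^2 - (k - l) |x|^2 < 0].  A subspace on which the form
   is nonnegative thus meets it trivially, so the span of the eigenvectors
   with nonnegative eigenvalue has dimension at most n. *)

Lemma char_poly_similar (R : comUnitRingType) n (P A : 'M[R]_n) :
  P \in unitmx -> char_poly (invmx P *m A *m P) = char_poly A.
Proof.
move=> Pu; rewrite /char_poly /char_poly_mx.
have -> : 'X%:M - map_mx polyC (invmx P *m A *m P) =
   map_mx polyC (invmx P) *m ('X%:M - map_mx polyC A) *m map_mx polyC P.
  rewrite mulmxBr mulmxBl !map_mxM; congr (_ - _).
  by rewrite mul_mx_scalar -scalemxAl -map_mxM mulVmx // map_mx1 scalemx1.
rewrite !det_mulmx !det_map_mx mulrC mulrA -rmorphM -det_mulmx mulmxV //.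
by rewrite det1 rmorph1 mul1r.
Qed.

Lemma eigenvalues_similar_diag (C : numClosedFieldType) m (P : 'M[C]_m)
    (d : 'rV[C]_m) :
  P \in unitmx ->
  perm_eq (eigenvalues (invmx P *m diag_mx d *m P))
          [seq d 0 i | i <- enum 'I_m].
Proof.
move=> Pu; rewrite /eigenvalues; case: closed_field_poly_normal => s /= s_roots.
set Y := invmx P *m diag_mx d *m P in s_roots *.
apply: prod_XsubC_eq; rewrite -[LHS]scale1r -(monicP (char_poly_monic Y)).
rewrite -s_roots char_poly_similar //.
rewrite char_poly_trig ?is_diag_mx_is_trig ?diag_mx_is_diag //.
by rewrite big_map big_enum /=; apply: eq_bigr => i _; rewrite mxE eqxx mulr1n.
Qed.

Lemma n_ge0_hermsymmx (C : numClosedFieldType) m (Y : 'M[C]_m) :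
  Y \is hermsymmx -> n_ge0 Y = #|[set i | 0 <= spectral_diag Y 0 i]|.
Proof.
move=> /hermitian_normalmx /orthomx_spectralP Y_spectral.
have := eigenvalues_similar_diag (spectral_diag Y) (spectral_unit Y).
rewrite -Y_spectral /n_ge0 => /permP ->.
rewrite count_map -sum1_card -sum1_count big_enum_cond /=.
by apply: eq_bigl => i; rewrite inE.
Qed.

Lemma mxsub_diag (R : pzRingType) m s (f : 'I_s -> 'I_m) (d : 'rV[R]_m) :
  injective f -> mxsub f f (diag_mx d) = diag_mx (colsub f d).
Proof. by move=> f_inj; apply/matrixP => i j; rewrite !mxE (inj_eq f_inj). Qed.

Lemma rowsub_unitarymx (C : numClosedFieldType) m n s (f : 'I_s -> 'I_m)
    (P : 'M[C]_(m, n)) :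
  injective f -> P \is unitarymx -> rowsub f P \is unitarymx.
Proof.
move=> f_inj /unitarymxP PP; apply/unitarymxP.
rewrite trmx_mxsub map_mxsub -mxsub_mul PP -diag_const_mx mxsub_diag //.
by rewrite mxsub_const diag_const_mx.
Qed.

Lemma rowsub_unitary_conj_diag (C : numClosedFieldType) m s (f : 'I_s -> 'I_m)
    (P : 'M[C]_m) (d : 'rV[C]_m) :
  injective f -> P \is unitarymx ->
  rowsub f P *m (P^t* *m diag_mx d *m P) *m (rowsub f P)^t* =
  diag_mx (colsub f d).
Proof.
move=> f_inj /unitarymxP PP.
rewrite !mulmxA mul_rowsub_mx PP -!mulmxA trmx_mxsub map_mxsub mulmx_colsub PP.
by rewrite mulmxA mul_rowsub_mx mul1mx -mxsub_mul mulmx1 mxsub_diag.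
Qed.

Lemma diag_form_ge0 (C : numClosedFieldType) m (e w : 'rV[C]_m) :
  (forall i, 0 <= e 0 i) -> 0 <= (w *m diag_mx e *m w^t*) 0 0.
Proof.
move=> e_ge0; rewrite mul_mx_diag mxE sumr_ge0 // => i _.
by rewrite !mxE mulrAC mulr_ge0 ?mul_conjC_ge0.
Qed.

Lemma exists_nonzero_mul_eq0 (F : fieldType) m p (A : 'M[F]_(m, p)) :
  (p < m)%N -> exists2 v : 'rV_m, v != 0 & v *m A = 0.
Proof.
move=> lt_pm; have : kermx A != 0.
  rewrite kermx_eq0 /row_free; apply: contraTneq lt_pm => <-.
  by rewrite -leqNgt rank_leq_col.
by case/rowV0Pn => v /sub_kermxP vA v_neq0; exists v.
Qed.

Lemma n_ge0_le_kernel_negdef (C : numClosedFieldType) m p (Y : 'M[C]_m)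
    (M : 'M[C]_(m, p)) :
  Y \is hermsymmx ->
  (forall x : 'rV_m, x != 0 -> x *m M = 0 -> (x *m Y *m x^t*) 0 0 < 0) ->
  (n_ge0 Y <= p)%N.
Proof.
move=> Y_herm Y_neg; rewrite n_ge0_hermsymmx //.
set I := [set i | _]; rewrite leqNgt; apply/negP => lt_pI.
pose P := spectralmx Y; pose d := spectral_diag Y.
have P_unitary : P \is unitarymx := spectral_unitarymx Y.
have Y_spectral : Y = P^t* *m diag_mx d *m P.
  by rewrite -invmx_unitary //; apply/orthomx_spectralP/hermitian_normalmx.
pose B := rowsub (@enum_val _ (mem I)) P.
have B_free : row_free B.
  rewrite /row_free mxrank_unitary // rowsub_unitarymx //.
  exact: enum_val_inj.
have [w w_neq0 wBM] := exists_nonzero_mul_eq0 (B *m M) lt_pI.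
have wB_neq0 : w *m B != 0 by rewrite mulmx_free_eq0.
have wB_ker : w *m B *m M = 0 by rewrite -mulmxA.
have := Y_neg _ wB_neq0 wB_ker.
have -> : w *m B *m Y *m (w *m B)^t* = w *m (B *m Y *m B^t*) *m w^t*.
  by rewrite trmx_mul map_mxM !mulmxA.
rewrite Y_spectral rowsub_unitary_conj_diag //; last exact: enum_val_inj.
have form_ge0 : 0 <= (w *m diag_mx (colsub enum_val d) *m w^t*) 0 0.
  by apply: diag_form_ge0 => i; rewrite mxE; have := enum_valP i; rewrite inE.
by move/lt_geF; rewrite form_ge0.
Qed.

Lemma hermitian_hermsymmx (C : numClosedFieldType) m (X : 'M[C]_m) :
  Defs.hermitian X -> X \is hermsymmx.
Proof.
move=> X_herm; rewrite qualifE /= expr0 scale1r; apply/eqP/matrixP => i j.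
by rewrite !mxE X_herm conjCK.
Qed.

Section IntersectionMatrix.

Variables (C : numClosedFieldType) (m n k l : nat) (S : 'I_m -> {set 'I_n}).
Hypotheses (card_S : forall i, #|S i| = k) (l_lt_k : (l < k)%N).

Definition incidence_mx : 'M[C]_(m, n) := \matrix_(i, a) (a \in S i)%:R.

Definition intersection_mx : 'M[C]_m :=
  \matrix_(i, j) (#|S i :&: S j|%:R - l%:R - (i == j)%:R * (k - l)%:R).

Lemma intersection_mxE :
  intersection_mx =
  incidence_mx *m incidence_mx^T - l%:R *: const_mx 1 - (k - l)%:R%:M.
Proof.
apply/matrixP => i j; rewrite !mxE mulr1 mulr_natl; congr (_ - _ - _).
rewrite -sum1_card natr_sum big_mkcond /=; apply: eq_bigr => a _.
by rewrite !mxE inE; case: (a \in S i); case: (a \in S j);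
  rewrite ?mulr1 ?mulr0.
Qed.

Lemma intersection_mx_hermitian : Defs.hermitian intersection_mx.
Proof.
move=> i j; rewrite !mxE !rmorphB rmorphM /= !conjC_nat setIC eq_sym.
by case: (j == i).
Qed.

Lemma intersection_mx_neq0 i j :
  intersection_mx i j != 0 -> (i != j) && (#|S i :&: S j| != l).
Proof.
rewrite mxE; have [->|ij] := eqVneq i j.
  by rewrite setIid card_S mul1r natrB 1?ltnW // subrr eqxx.
by rewrite mul0r subr0; apply: contraNN => /eqP ->; rewrite subrr.
Qed.

Lemma intersection_mx_form_lt0 (x : 'rV[C]_m) :
  x != 0 -> x *m incidence_mx = 0 -> (x *m intersection_mx *m x^t*) 0 0 < 0.
Proof.
move=> x_neq0 xM.
have J_form_ge0 : 0 <= (x *m const_mx 1 *m x^t*) 0 0.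
  suff -> : (x *m const_mx 1 *m x^t*) 0 0 = (\sum_i x 0 i) * (\sum_i x 0 i)^*.
    exact: mul_conjC_ge0.
  rewrite mxE rmorph_sum mulr_sumr; apply: eq_bigr => j _.
  by rewrite !mxE; congr (_ * _); apply: eq_bigr => i _; rewrite mxE mulr1.
have norm_gt0 : 0 < (x *m x^t*) 0 0 by rewrite -dotmxE; exact: dotmx_is_dotmx.
rewrite intersection_mxE !mulmxBr !mulmxBl mulmxA xM !mul0mx -scalemxAr.
rewrite -scalemxAl mul_mx_scalar -scalemxAl.
move: J_form_ge0 norm_gt0.
move: (x *m const_mx 1 *m x^t*) (x *m x^t*) => J N J_ge0 N_gt0.
rewrite !mxE sub0r -opprD oppr_lt0 ltr_wpDl ?mulr_ge0 ?ler0n //.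
by rewrite mulr_gt0 // ltr0n subn_gt0.
Qed.

End IntersectionMatrix.

Theorem proposition3p4 (C : numClosedFieldType) (n k l : nat) :
  (0 < k)%N -> (k < n)%N -> (l <= k - 1)%N ->
  exists X : 'M[C]_#|{: ksubset n k}|,
    weighted_adjacency (@johnson_adj n k (pred1 l)) X /\ (n_ge0 X <= n)%N.
Proof.
move=> k_gt0 _ l_le; have l_lt_k : (l < k)%N.
  by rewrite (leq_ltn_trans l_le) // subn1 ltn_predL.
pose S (i : 'I_#|{: ksubset n k}|) := val (enum_val i).
have card_S i : #|S i| = k by apply/eqP; exact: (valP (enum_val i)).
exists (intersection_mx C k l S); split; first split.
- exact: intersection_mx_hermitian.
- move=> i j /(intersection_mx_neq0 card_S l_lt_k) /andP[ij Sij].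
  by rewrite /johnson_adj (inj_eq enum_val_inj) ij.
- apply: (n_ge0_le_kernel_negdef (M := incidence_mx C S)).
    exact/hermitian_hermsymmx/intersection_mx_hermitian.
  exact: intersection_mx_form_lt0.
Qed.
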